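(* Let $\vartheta(z,\tau)=\sum_{m\in\mathbf{Z}}e^{\pi i m^2\tau+2\pi i mz}$ for $z\in\mathbf{C}$, $\operatorname{Im}\tau>0$, and for $t>0$ let $c(t)=\min_{x\in\mathbf{R}}\vartheta(x,it)$ and $C(t)=\vartheta(0,it)$. Then (i) for every $t>0$, $c(t)=\vartheta(\tfrac12,it)$; (ii) for every $t>0.527$, $\dfrac{C(t)\,(C(t)-1)}{c(t)}<1$. *)

From Stdlib Require Import Reals ZArith.
From Coquelicot Require Import Coquelicot.
Open Scope R_scope.

(* The m-th term  e^{pi i m^2 tau + 2 pi i m z}  of the Jacobi theta series,
   for z = (zr, zi), tau = (tr, ti) in C, written as (real part, imag part):
   modulus  exp(-pi m^2 ti - 2 pi m zi),  argument  pi m^2 tr + 2 pi m zr. *)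
Definition theta_mod (m : Z) (z tau : C) : R :=
  exp (- PI * IZR m ^ 2 * snd tau - 2 * PI * IZR m * snd z).
Definition theta_arg (m : Z) (z tau : C) : R :=
  PI * IZR m ^ 2 * fst tau + 2 * PI * IZR m * fst z.
Definition theta_term (m : Z) (z tau : C) : C :=
  (theta_mod m z tau * cos (theta_arg m z tau),
   theta_mod m z tau * sin (theta_arg m z tau)).

(* Sum over m in Z, organized as m = 0, then the pairs {n, -n} for n >= 1
   (the series is absolutely convergent for Im tau > 0, so the order is
   irrelevant). *)
Definition theta_pair (z tau : C) (n : nat) : C :=
  match n with
  | O => theta_term 0 z tau
  | S _ => Cplus (theta_term (Z.of_nat n) z tau) (theta_term (- Z.of_nat n) z tau)
  end.

Definition vartheta (z tau : C) : C :=
  (Series (fun n => fst (theta_pair z tau n)),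
   Series (fun n => snd (theta_pair z tau n))).

(* vartheta(x, i t) for real x, t; it is real-valued, we take its real part. *)
Definition theta_it (x t : R) : R := fst (vartheta (x, 0) (0, t)).

Definition c_min (t : R) : R :=
  real (Glb_Rbar (fun y => exists x : R, y = theta_it x t)).

Definition C_max (t : R) : R := theta_it 0 t.

(* The Jacobi triple product writes theta(x, it) as
   prod_(k >= 1) (1 - q^(2k)) |1 + q^(2k-1) e^(2 pi i x)|^2 with q = e^(-pi t), and every factor
   is smallest at x = 1/2.  Infinite products are avoided: the product over k <= n, normalised by
   (q^2; q^2)_n^2 / (q^2; q^2)_(2n), expands into the cosine polynomial
   sum_(|j| <= n) c_(n,j) q^(j^2) cos(2 pi j x), whose q-binomial ratios c_(n,j) lie in [0, 1]
   and are within j q^(2(n+1-j)) of 1.  Hence it converges geometrically to theta(x, it), and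
   the minimum at x = 1/2 survives in the limit.  Part (ii) only needs
   theta(x, it) = 1 + 2 q cos(2 pi x) + O(q^4) together with q <= 1/5 for t > 0.527. *)

From Stdlib Require Import Reals ZArith Lra Lia Machin.
From Coquelicot Require Import Coquelicot.
Open Scope R_scope.

Lemma Series_tail_geom_le (a : nat -> R) (n : nat) (c q : R) :
  0 <= q < 1 -> (forall k, Rabs (a (S n + k)%nat) <= c * q ^ k) ->
  ex_series a /\ Rabs (Series a - sum_f_R0 a n) <= c / (1 - q).
Proof.
  intros Hq Hbound.
  assert (Hgeom : ex_series (fun k => c * q ^ k)).
  { apply (ex_series_scal_l c (fun k => q ^ k)), ex_series_geom.
    rewrite Rabs_pos_eq; lra. }
  assert (Habs : ex_series (fun k => Rabs (a (S n + k)%nat))).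
  { apply (ex_series_le (V := R_CompleteNormedModule)) with (2 := Hgeom).
    intros k; change (Rabs (Rabs (a (S n + k)%nat)) <= c * q ^ k).
    rewrite Rabs_Rabsolu; apply Hbound. }
  assert (Ha : ex_series a).
  { apply (ex_series_incr_n a (S n)).
    apply (ex_series_le (V := R_CompleteNormedModule)) with (2 := Habs).
    intros k; apply Rle_refl. }
  split; [exact Ha|].
  rewrite (Series_incr_n a (S n)) by (lia || exact Ha); simpl pred.
  replace (sum_f_R0 a n + Series (fun k => a (S n + k)%nat) - sum_f_R0 a n)
    with (Series (fun k => a (S n + k)%nat)) by ring.
  eapply Rle_trans; [apply Series_Rabs, Habs|].
  eapply Rle_trans; [apply (Series_le _ _ (fun k => conj (Rabs_pos _) (Hbound k)) Hgeom)|].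
  rewrite Series_scal_l, Series_geom by (rewrite Rabs_pos_eq; lra).
  right; field; lra.
Qed.

Lemma is_lim_seq_geom_error (u : nat -> R) (l c q : R) :
  0 <= q < 1 -> (forall n, Rabs (u n - l) <= c * q ^ n) -> is_lim_seq u l.
Proof.
  intros Hq Hu.
  assert (Hlim : forall s, is_lim_seq (fun n => l + s * (c * q ^ n)) l).
  { intros s; pattern l at 2; rewrite <- (Rplus_0_r l).
    apply is_lim_seq_plus'; [apply is_lim_seq_const|].
    assert (H0 : is_lim_seq (fun n => s * (c * q ^ n)) (Rbar_mult s (Rbar_mult c 0))).
    { apply is_lim_seq_scal_l, is_lim_seq_scal_l, is_lim_seq_geom.
      rewrite Rabs_pos_eq; lra. }
    simpl in H0; rewrite !Rmult_0_r in H0; exact H0. }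
  apply is_lim_seq_le_le with (2 := Hlim (-1)) (3 := Hlim 1).
  intros n; specialize (Hu n); apply Rabs_le_between in Hu; lra.
Qed.

Lemma INR_mul_pow_le (q : R) (n : nat) : 0 <= q < 1 -> INR n * q ^ n <= 1 / (1 - q).
Proof.
  intros Hq.
  assert (Hpos : 0 < 1 / (1 - q)) by (apply Rdiv_lt_0_compat; lra).
  destruct n as [|m]; [simpl; lra|].
  apply Rle_trans with (sum_f_R0 (fun k => q ^ k) m).
  - rewrite Rmult_comm, <- sum_cte.
    apply sum_Rle; intros k Hk.
    replace (S m) with (k + (S m - k))%nat by lia; rewrite pow_add.
    pose proof (pow_le q k (proj1 Hq)); pose proof (pow_le q (S m - k) (proj1 Hq)).
    pose proof (pow_incr q 1 (S m - k) ltac:(lra)); rewrite pow1 in *; nra.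
  - rewrite tech3 by lra.
    apply Rmult_le_compat_r; [left; apply Rinv_0_lt_compat; lra|].
    pose proof (pow_le q (S m)); lra.
Qed.

Lemma geom_head_sum_le (q : R) (n : nat) : 0 <= q < 1 ->
  sum_f_R0 (fun k => q ^ k * (2 * INR n * (q ^ n * q ^ n))) n <= 2 / (1 - q) ^ 2 * q ^ n.
Proof.
  intros Hq; rewrite <- scal_sum, tech3 by lra.
  pose proof (INR_mul_pow_le q n Hq); pose proof (pow_le q n (proj1 Hq)).
  pose proof (pow_le q (S n) (proj1 Hq)); pose proof (pos_INR n).
  replace (2 / (1 - q) ^ 2 * q ^ n) with (/ (1 - q) * (2 * (1 / (1 - q)) * q ^ n))
    by (field; lra).
  replace (2 * INR n * (q ^ n * q ^ n) * ((1 - q ^ S n) / (1 - q)))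
    with (/ (1 - q) * ((1 - q ^ S n) * (2 * (INR n * q ^ n) * q ^ n))) by (field; lra).
  apply Rmult_le_compat_l; [left; apply Rinv_0_lt_compat; lra|].
  assert (INR n * q ^ n * q ^ n <= 1 / (1 - q) * q ^ n) by (apply Rmult_le_compat_r; lra).
  pose proof (Rmult_le_pos _ _ (pos_INR n) (pow_le q n (proj1 Hq))).
  assert (0 <= q ^ S n * (INR n * q ^ n * q ^ n)) by (apply Rmult_le_pos; nra).
  nra.
Qed.

Definition zpair (f : Z -> R) (k : nat) : R :=
  match k with
  | O => f 0%Z
  | S _ => f (Z.of_nat k) + f (- Z.of_nat k)%Z
  end.

Lemma zpair_abs_le (f : Z -> R) (b : R) k :
  (forall j, Z.abs_nat j = k -> Rabs (f j) <= b) -> Rabs (zpair f k) <= 2 * b.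
Proof.
  intros Hb; destruct k as [|k]; cbn [zpair].
  - pose proof (Hb 0%Z eq_refl); pose proof (Rabs_pos (f 0%Z)); lra.
  - pose proof (Hb (Z.of_nat (S k)) ltac:(lia)); pose proof (Hb (- Z.of_nat (S k))%Z ltac:(lia)).
    pose proof (Rabs_triang (f (Z.of_nat (S k))) (f (- Z.of_nat (S k))%Z)); lra.
Qed.

Definition sym_sum (f : Z -> R) (N : nat) : R := sum_f_R0 (zpair f) N.

Lemma sym_sum_succ f N :
  sym_sum f (S N) = sym_sum f N + f (Z.of_nat (S N)) + f (- Z.of_nat (S N))%Z.
Proof. unfold sym_sum; cbn [sum_f_R0 zpair]; ring. Qed.

Lemma sym_sum_ext f g N : (forall j, f j = g j) -> sym_sum f N = sym_sum g N.
Proof.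
  intros Hfg; unfold sym_sum; apply sum_eq; intros [|k] _; simpl; rewrite ?Hfg; reflexivity.
Qed.

Lemma sym_sum_add f g N : sym_sum (fun j => f j + g j) N = sym_sum f N + sym_sum g N.
Proof. induction N; [unfold sym_sum; simpl; ring|rewrite !sym_sum_succ, IHN; ring]. Qed.

Lemma sym_sum_scal c f N : sym_sum (fun j => c * f j) N = c * sym_sum f N.
Proof. induction N; [unfold sym_sum; simpl; ring|rewrite !sym_sum_succ, IHN; ring]. Qed.

Section SupportedSums.
Variables (f : Z -> R) (n : nat).
Hypothesis f_supp : forall j, (Z.of_nat n < Z.abs j)%Z -> f j = 0.

Lemma sym_sum_widen N : (n <= N)%nat -> sym_sum f N = sym_sum f n.
Proof.
  induction 1 as [|N HN IH]; [reflexivity|].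
  rewrite sym_sum_succ, IH, !f_supp by lia; ring.
Qed.

Lemma sym_sum_shift_succ N : (n < N)%nat -> sym_sum (fun j => f (j + 1)%Z) N = sym_sum f N.
Proof.
  intros HnN.
  assert (Hshift : forall M, sym_sum (fun j => f (j + 1)%Z) M + f (- Z.of_nat M)%Z
                             = sym_sum f M + f (Z.of_nat M + 1)%Z).
  { induction M as [|M IH]; [unfold sym_sum; simpl; ring|].
    rewrite !sym_sum_succ.
    replace (Z.of_nat (S M) + 1)%Z with (Z.of_nat (S (S M))) by lia.
    replace (- Z.of_nat (S M) + 1)%Z with (- Z.of_nat M)%Z by lia.
    replace (Z.of_nat M + 1)%Z with (Z.of_nat (S M)) in IH by lia.
    lra. }
  specialize (Hshift N); rewrite !f_supp in Hshift by lia; lra.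
Qed.

Lemma sym_sum_shift_pred N : (n < N)%nat -> sym_sum (fun j => f (j - 1)%Z) N = sym_sum f N.
Proof.
  intros HnN.
  assert (Hshift : forall M, sym_sum f M + f (- Z.of_nat M - 1)%Z
                             = sym_sum (fun j => f (j - 1)%Z) M + f (Z.of_nat M)).
  { induction M as [|M IH]; [unfold sym_sum; simpl; ring|].
    rewrite !sym_sum_succ.
    replace (Z.of_nat (S M) - 1)%Z with (Z.of_nat M) by lia.
    replace (- Z.of_nat (S M) - 1)%Z with (- Z.of_nat (S (S M)))%Z by lia.
    replace (- Z.of_nat M - 1)%Z with (- Z.of_nat (S M))%Z in IH by lia.
    lra. }
  specialize (Hshift N); rewrite !f_supp in Hshift by lia; lra.
Qed.

End SupportedSums.

Section Nome.
Variable t : R.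
Hypothesis t_pos : 0 < t.

(* [qpow r] is [q ^ r] for the nome [q = exp (- PI * t)]. *)
Definition qpow (r : R) : R := exp (- PI * t * r).

Lemma qpow_add r s : qpow (r + s) = qpow r * qpow s.
Proof. unfold qpow; rewrite <- exp_plus; f_equal; ring. Qed.

Lemma qpow_0 : qpow 0 = 1.
Proof. unfold qpow; rewrite Rmult_0_r; apply exp_0. Qed.

Lemma qpow_gt_0 r : 0 < qpow r.
Proof. apply exp_pos. Qed.

Lemma qpow_opp r : qpow (- r) = / qpow r.
Proof. unfold qpow; rewrite <- exp_Ropp; f_equal; ring. Qed.

Lemma qpow_INR n : qpow (INR n) = qpow 1 ^ n.
Proof.
  induction n as [|n IH]; [apply qpow_0|].
  rewrite S_INR, qpow_add, IH; simpl; ring.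
Qed.

Lemma qpow_le r s : r <= s -> qpow s <= qpow r.
Proof.
  intros Hrs; destruct (Req_dec r s) as [->|Hne]; [lra|].
  left; unfold qpow; apply exp_increasing.
  pose proof (Rmult_lt_0_compat _ _ PI_RGT_0 t_pos); nra.
Qed.

Lemma qpow_lt_1 r : 0 < r -> qpow r < 1.
Proof.
  intros Hr; rewrite <- exp_0; unfold qpow; apply exp_increasing.
  pose proof (Rmult_lt_0_compat _ _ PI_RGT_0 t_pos); nra.
Qed.

Lemma nome_bounds : 0 <= qpow 1 < 1.
Proof. split; [left; apply qpow_gt_0|apply qpow_lt_1; lra]. Qed.

Definition theta_cos_term (th : R) (m : Z) : R := qpow (IZR m ^ 2) * cos (IZR m * th).

Lemma theta_it_Series x : theta_it x t = Series (zpair (theta_cos_term (2 * PI * x))).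
Proof.
  assert (Hterm : forall m, fst (theta_term m (x, 0) (0, t)) = theta_cos_term (2 * PI * x) m).
  { intros m; unfold theta_term, theta_mod, theta_arg, theta_cos_term, qpow; cbn [fst snd].
    f_equal; f_equal; ring. }
  unfold theta_it, vartheta; cbn [fst].
  apply Series_ext; intros [|k]; cbn [zpair theta_pair Cplus fst]; rewrite !Hterm; reflexivity.
Qed.

Lemma theta_cos_term_abs th m : Rabs (theta_cos_term th m) <= qpow (INR (Z.abs_nat m) ^ 2).
Proof.
  replace (INR (Z.abs_nat m) ^ 2) with (IZR m ^ 2)
    by (rewrite INR_IZR_INZ, Zabs2Nat.id_abs, abs_IZR, pow2_abs; reflexivity).
  unfold theta_cos_term; rewrite Rabs_mult, (Rabs_pos_eq (qpow _)) by (left; apply qpow_gt_0).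
  assert (Rabs (cos (IZR m * th)) <= 1) by apply Rabs_le, COS_bound.
  pose proof (qpow_gt_0 (IZR m ^ 2)); nra.
Qed.

Lemma theta_tail_le th n :
  ex_series (zpair (theta_cos_term th)) /\
  Rabs (Series (zpair (theta_cos_term th)) - sum_f_R0 (zpair (theta_cos_term th)) n)
    <= 2 * qpow (INR (S n) ^ 2) / (1 - qpow 1).
Proof.
  apply Series_tail_geom_le; [apply nome_bounds|]; intros k.
  eapply Rle_trans.
  { apply (zpair_abs_le _ (qpow (INR (S n + k) ^ 2))); intros j <-; apply theta_cos_term_abs. }
  rewrite Rmult_assoc, <- qpow_INR, <- qpow_add.
  apply Rmult_le_compat_l; [lra|]; apply qpow_le.
  rewrite plus_INR, S_INR; pose proof (pos_INR k); pose proof (pos_INR n); nra.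
Qed.

Fixpoint qpoch (m : nat) : R :=
  match m with
  | O => 1
  | S m' => qpoch m' * (1 - qpow (2 * INR m))
  end.

Lemma qpoch_succ m : qpoch (S m) = qpoch m * (1 - qpow (2 * INR (S m))).
Proof. reflexivity. Qed.

Lemma qpoch_gt_0 m : 0 < qpoch m.
Proof.
  induction m as [|m IH]; [simpl; lra|rewrite qpoch_succ].
  apply Rmult_lt_0_compat; [exact IH|].
  assert (qpow (2 * INR (S m)) < 1); [|lra].
  apply qpow_lt_1; rewrite S_INR; pose proof (pos_INR m); lra.
Qed.

(* [1 / qpoch z], extended by [0] to negative [z] so that the q-binomial coefficients
   below vanish outside their range. *)
Definition qpoch_inv (z : Z) : R := if (z <? 0)%Z then 0 else / qpoch (Z.to_nat z).

Lemma qpoch_inv_neg z : (z < 0)%Z -> qpoch_inv z = 0.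
Proof. intros Hz; unfold qpoch_inv; rewrite (proj2 (Z.ltb_lt _ _) Hz); reflexivity. Qed.

Lemma qpoch_inv_nat m : qpoch_inv (Z.of_nat m) = / qpoch m.
Proof.
  unfold qpoch_inv; rewrite (proj2 (Z.ltb_ge _ _)) by lia; rewrite Nat2Z.id; reflexivity.
Qed.

Lemma qpoch_inv_pred z : qpoch_inv (z - 1) = (1 - qpow (2 * IZR z)) * qpoch_inv z.
Proof.
  destruct (Z_lt_le_dec z 1) as [Hz|Hz].
  - rewrite (qpoch_inv_neg (z - 1)) by lia.
    destruct (Z.eq_dec z 0) as [->|Hz0]; [rewrite Rmult_0_r, qpow_0; ring|].
    rewrite qpoch_inv_neg by lia; ring.
  - destruct (Z_of_nat_complete (z - 1) ltac:(lia)) as [m Hm].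
    rewrite Hm; replace z with (Z.of_nat (S m)) by lia.
    rewrite !qpoch_inv_nat, <- INR_IZR_INZ.
    pose proof (qpoch_gt_0 (S m)) as Hpos; rewrite qpoch_succ in *.
    field; split; intros Habs; rewrite Habs in Hpos; lra.
Qed.

(* [q ^ (j ^ 2)] times the Gaussian binomial coefficient [2n choose n + j] in base [q ^ 2],
   i.e. the coefficient of [z ^ j] in [prod_(k < n) (1 + q ^ (2k+1) z) (1 + q ^ (2k+1) / z)]. *)
Definition tp_coef (n : nat) (j : Z) : R :=
  qpow (IZR j ^ 2) * qpoch (2 * n) * qpoch_inv (Z.of_nat n + j) * qpoch_inv (Z.of_nat n - j).

Lemma tp_coef_out n j : (Z.of_nat n < Z.abs j)%Z -> tp_coef n j = 0.
Proof.
  intros Hj; unfold tp_coef; destruct (Z_lt_le_dec (Z.of_nat n + j) 0).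
  - rewrite (qpoch_inv_neg (Z.of_nat n + j)) by lia; ring.
  - rewrite (qpoch_inv_neg (Z.of_nat n - j)) by lia; ring.
Qed.

Lemma tp_coef_0_0 : tp_coef 0 0 = 1.
Proof.
  unfold tp_coef; change (Z.of_nat 0 + 0)%Z with (Z.of_nat 0).
  change (Z.of_nat 0 - 0)%Z with (Z.of_nat 0).
  rewrite qpoch_inv_nat; simpl; rewrite Rmult_0_l, qpow_0; field.
Qed.

Local Ltac qpow_monomial :=
  rewrite <- ?qpow_opp, <- ?qpow_add; f_equal;
  rewrite ?minus_IZR, ?plus_IZR, ?S_INR, ?mult_INR, <- ?INR_IZR_INZ; simpl IZR; simpl INR; ring.

(* Multiplying by [(1 + a z) (1 + a / z)] with [a = q ^ (2n+1)]. *)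
Lemma tp_coef_succ n j :
  let a := qpow (2 * INR n + 1) in
  tp_coef (S n) j = (1 + a ^ 2) * tp_coef n j + a * tp_coef n (j - 1) + a * tp_coef n (j + 1).
Proof.
  intros a; unfold tp_coef.
  set (m := Z.of_nat n).
  set (q := qpow 1); set (y := qpow (2 * IZR j)); set (P := qpow (2 * (INR n + 1))).
  set (L := qpoch_inv (m + 1 + j)); set (M := qpoch_inv (m + 1 - j)).
  assert (Hq : q <> 0) by (apply Rgt_not_eq, qpow_gt_0).
  assert (Hy : y <> 0) by (apply Rgt_not_eq, qpow_gt_0).
  assert (HL0 : qpoch_inv (m + j) = (1 - P * y) * L).
  { replace (m + j)%Z with (m + 1 + j - 1)%Z by lia; rewrite qpoch_inv_pred.
    unfold P, y, m; do 2 f_equal; qpow_monomial. }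
  assert (HM0 : qpoch_inv (m - j) = (1 - P * / y) * M).
  { replace (m - j)%Z with (m + 1 - j - 1)%Z by lia; rewrite qpoch_inv_pred.
    unfold P, y, m; do 2 f_equal; qpow_monomial. }
  assert (HL1 : qpoch_inv (m + (j - 1)) = (1 - P * y * / q * / q) * ((1 - P * y) * L)).
  { replace (m + (j - 1))%Z with (m + j - 1)%Z by lia; rewrite qpoch_inv_pred, HL0.
    unfold P, y, q, m; do 3 f_equal; qpow_monomial. }
  assert (HM2 : qpoch_inv (m - (j + 1)) = (1 - P * / y * / q * / q) * ((1 - P * / y) * M)).
  { replace (m - (j + 1))%Z with (m - j - 1)%Z by lia; rewrite qpoch_inv_pred, HM0.
    unfold P, y, q, m; do 3 f_equal; qpow_monomial. }
  assert (HM1 : qpoch_inv (m - (j - 1)) = M) by (unfold M; f_equal; lia).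
  assert (HL2 : qpoch_inv (m + (j + 1)) = L) by (unfold L; f_equal; lia).
  assert (Hpoch : qpoch (2 * S n) = qpoch (2 * n) * (1 - P * P * / q * / q) * (1 - P * P)).
  { replace (2 * S n)%nat with (S (S (2 * n))) by lia; rewrite !qpoch_succ.
    unfold P, q; do 3 f_equal; qpow_monomial. }
  assert (Hsq1 : qpow (IZR (j - 1) ^ 2) = qpow (IZR j ^ 2) * q * / y)
    by (unfold q, y; qpow_monomial).
  assert (Hsq2 : qpow (IZR (j + 1) ^ 2) = qpow (IZR j ^ 2) * q * y)
    by (unfold q, y; qpow_monomial).
  assert (Ha : a = P * / q) by (unfold a, P, q; qpow_monomial).
  replace (Z.of_nat (S n)) with (m + 1)%Z by (unfold m; lia).
  fold L M; rewrite HL0, HM0, HL1, HM1, HL2, HM2, Hpoch, Hsq1, Hsq2, Ha.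
  field; auto.
Qed.

Fixpoint theta_prod (th : R) (n : nat) : R :=
  match n with
  | O => 1
  | S m => theta_prod th m * (1 + qpow (2 * INR m + 1) ^ 2 + 2 * qpow (2 * INR m + 1) * cos th)
  end.

Lemma theta_prod_sym_sum th n N : (n <= N)%nat ->
  theta_prod th n = sym_sum (fun j => tp_coef n j * cos (IZR j * th)) N.
Proof.
  revert N; induction n as [|n IH]; intros N HnN.
  - rewrite (sym_sum_widen _ 0);
      [| intros j Hj; cbv beta; rewrite tp_coef_out by exact Hj; ring | exact HnN].
    unfold sym_sum; simpl; rewrite tp_coef_0_0, Rmult_0_l, cos_0; ring.
  - set (a := qpow (2 * INR n + 1)).
    change (theta_prod th (S n)) with (theta_prod th n * (1 + a ^ 2 + 2 * a * cos th)).
    rewrite (IH N) by lia.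
    set (h0 := fun j => tp_coef n j * cos (IZR j * th)).
    set (hp := fun j => tp_coef n j * cos (IZR (j + 1) * th)).
    set (hm := fun j => tp_coef n j * cos (IZR (j - 1) * th)).
    assert (Hp : forall j, (Z.of_nat n < Z.abs j)%Z -> hp j = 0)
      by (intros j Hj; unfold hp; rewrite tp_coef_out by exact Hj; ring).
    assert (Hm : forall j, (Z.of_nat n < Z.abs j)%Z -> hm j = 0)
      by (intros j Hj; unfold hm; rewrite tp_coef_out by exact Hj; ring).
    assert (Hcos : sym_sum hp N + sym_sum hm N = 2 * cos th * sym_sum h0 N).
    { rewrite <- sym_sum_add, <- sym_sum_scal; apply sym_sum_ext; intros j.
      unfold hp, hm, h0; rewrite plus_IZR, minus_IZR, !Rmult_plus_distr_r, Rmult_minus_distr_r.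
      rewrite cos_plus, cos_minus, Rmult_1_l; ring. }
    transitivity (sym_sum (fun j => (1 + a ^ 2) * h0 j + a * hp (j - 1)%Z + a * hm (j + 1)%Z) N).
    + rewrite !sym_sum_add, !sym_sum_scal.
      rewrite (sym_sum_shift_pred hp n Hp N), (sym_sum_shift_succ hm n Hm N) by lia.
      transitivity ((1 + a ^ 2) * sym_sum h0 N + a * (sym_sum hp N + sym_sum hm N));
        [rewrite Hcos|]; ring.
    + apply sym_sum_ext; intros j; unfold h0, hp, hm.
      rewrite tp_coef_succ, Z.sub_add, Z.add_simpl_r; fold a; ring.
Qed.

Lemma theta_prod_PI_le th n : 0 <= theta_prod PI n <= theta_prod th n.
Proof.
  induction n as [|n IH]; [simpl; lra|].
  cbn [theta_prod]; rewrite cos_PI.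
  set (a := qpow (2 * INR n + 1)).
  assert (0 < a) by apply qpow_gt_0.
  pose proof (COS_bound th); pose proof (pow2_ge_0 (1 - a)).
  assert (Hfac : 0 <= 1 + a ^ 2 + 2 * a * -1 <= 1 + a ^ 2 + 2 * a * cos th) by nra.
  split; [apply Rmult_le_pos|apply Rmult_le_compat]; lra.
Qed.

Definition theta_approx (th : R) (n : nat) : R := theta_prod th n * (qpoch n ^ 2 / qpoch (2 * n)).

(* The q-binomial ratio [(2n choose n + j) / (2n choose n)] in base [q ^ 2]. *)
Definition binom_ratio (n : nat) (j : Z) : R :=
  qpoch n ^ 2 * qpoch_inv (Z.of_nat n + j) * qpoch_inv (Z.of_nat n - j).

Lemma theta_approx_sym_sum th n :
  theta_approx th n = sym_sum (fun j => binom_ratio n j * theta_cos_term th j) n.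
Proof.
  unfold theta_approx; rewrite (theta_prod_sym_sum th n n) by lia.
  rewrite Rmult_comm, <- sym_sum_scal; apply sym_sum_ext; intros j.
  unfold tp_coef, binom_ratio, theta_cos_term.
  pose proof (qpoch_gt_0 (2 * n)); field; lra.
Qed.

Lemma binom_ratio_0 n : binom_ratio n 0 = 1.
Proof.
  unfold binom_ratio; rewrite Z.add_0_r, Z.sub_0_r, qpoch_inv_nat.
  pose proof (qpoch_gt_0 n); field; lra.
Qed.

Lemma binom_ratio_abs n j : binom_ratio n (Z.of_nat (Z.abs_nat j)) = binom_ratio n j.
Proof.
  rewrite Zabs2Nat.id_abs; unfold binom_ratio.
  destruct (Z.abs_spec j) as [[_ ->]|[_ ->]]; [reflexivity|].
  rewrite Z.sub_opp_r, <- Z.add_opp_r; ring.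
Qed.

Lemma binom_ratio_step n j :
  binom_ratio n (Z.of_nat j) * (1 - qpow (2 * (INR n - INR j)))
  = binom_ratio n (Z.of_nat (S j)) * (1 - qpow (2 * (INR n + INR j + 1))).
Proof.
  unfold binom_ratio.
  replace (Z.of_nat n + Z.of_nat j)%Z with (Z.of_nat n + Z.of_nat (S j) - 1)%Z by lia.
  replace (Z.of_nat n - Z.of_nat (S j))%Z with (Z.of_nat n - Z.of_nat j - 1)%Z by lia.
  rewrite !qpoch_inv_pred.
  rewrite minus_IZR, plus_IZR, <- !INR_IZR_INZ, S_INR.
  replace (INR n + (INR j + 1)) with (INR n + INR j + 1) by ring; ring.
Qed.

Lemma binom_ratio_bounds n j : (j <= n)%nat ->
  0 <= binom_ratio n (Z.of_nat j) <= 1 /\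
  1 - binom_ratio n (Z.of_nat j) <= INR j * qpow (2 * (INR n + 1 - INR j)).
Proof.
  induction j as [|j IH]; intros Hjn.
  - rewrite binom_ratio_0; simpl; lra.
  - destruct IH as [[Hc0 Hc1] Hc2]; [lia|].
    pose proof (binom_ratio_step n j) as Hstep.
    set (c := binom_ratio n (Z.of_nat j)) in *; set (c' := binom_ratio n (Z.of_nat (S j))) in *.
    set (E1 := qpow (2 * (INR n + INR j + 1))) in *; set (E2 := qpow (2 * (INR n - INR j))) in *.
    assert (Hjn' : INR j + 1 <= INR n) by (rewrite <- S_INR; apply le_INR; exact Hjn).
    assert (HE1 : 0 < E1) by apply qpow_gt_0.
    assert (HE12 : E1 <= E2) by (apply qpow_le; pose proof (pos_INR j); lra).
    assert (HE2 : E2 < 1) by (apply qpow_lt_1; lra).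
    assert (HE3 : qpow (2 * (INR n + 1 - INR j)) <= E2) by (apply qpow_le; lra).
    assert (Hc'0 : 0 <= c').
    { apply Rmult_le_reg_r with (1 - E1); [lra|]; rewrite Rmult_0_l, <- Hstep.
      apply Rmult_le_pos; lra. }
    assert (Hc' : c * (1 - E2) <= c' <= c) by (split; nra).
    replace (INR n + 1 - INR (S j)) with (INR n - INR j) by (rewrite S_INR; ring); fold E2.
    rewrite S_INR; pose proof (pos_INR j); split; nra.
Qed.

Lemma binom_ratio_defect_le n k : (k <= n)%nat ->
  (1 - binom_ratio n (Z.of_nat k)) * qpow (INR k ^ 2) <= INR n * (qpow (2 * INR n) * qpow 1 ^ k).
Proof.
  intros Hk; destruct (binom_ratio_bounds n k Hk) as [_ Hdefect].
  assert (Hexp : qpow (2 * (INR n + 1 - INR k)) * qpow (INR k ^ 2)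
                 <= qpow (2 * INR n) * qpow 1 ^ k).
  { rewrite <- qpow_INR, <- !qpow_add; apply qpow_le.
    (* [k ^ 2 + 2 (n + 1 - k) >= 2 n + k] because [(k - 1) (k - 2) >= 0] for integers [k]. *)
    destruct k as [|[|k]]; [simpl; lra|simpl; lra|].
    rewrite !S_INR; pose proof (pos_INR k); nra. }
  assert (Hkn : INR k <= INR n) by (apply le_INR; exact Hk).
  pose proof (qpow_gt_0 (INR k ^ 2)); pose proof (pos_INR k).
  pose proof (Rmult_le_pos _ _ (Rlt_le _ _ (qpow_gt_0 (2 * INR n)))
                (pow_le (qpow 1) k (proj1 nome_bounds))).
  apply Rle_trans with (INR k * (qpow (2 * (INR n + 1 - INR k)) * qpow (INR k ^ 2))).
  { rewrite <- Rmult_assoc; apply Rmult_le_compat_r; lra. }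
  apply Rle_trans with (INR k * (qpow (2 * INR n) * qpow 1 ^ k)).
  { apply Rmult_le_compat_l; lra. }
  apply Rmult_le_compat_r; lra.
Qed.

Lemma theta_approx_head_le th n :
  Rabs (sum_f_R0 (zpair (theta_cos_term th)) n - theta_approx th n)
    <= 2 / (1 - qpow 1) ^ 2 * qpow 1 ^ n.
Proof.
  rewrite theta_approx_sym_sum; unfold sym_sum; rewrite <- minus_sum.
  eapply Rle_trans; [apply sum_f_R0_triangle|].
  eapply Rle_trans; [|apply (geom_head_sum_le (qpow 1) n nome_bounds)].
  apply sum_Rle; intros k Hk.
  replace (zpair _ k - zpair _ k)
    with (zpair (fun j => (1 - binom_ratio n j) * theta_cos_term th j) k)
    by (destruct k; simpl; ring).
  replace (qpow 1 ^ n * qpow 1 ^ n) with (qpow (2 * INR n))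
    by (rewrite <- qpow_INR, <- qpow_add; f_equal; ring).
  pose proof (binom_ratio_defect_le n k Hk).
  destruct (binom_ratio_bounds n k Hk) as [[_ Hc1] _].
  apply Rle_trans with (2 * ((1 - binom_ratio n (Z.of_nat k)) * qpow (INR k ^ 2))); [|lra].
  apply zpair_abs_le; intros j Hj.
  rewrite Rabs_mult, <- binom_ratio_abs, Hj, Rabs_pos_eq by lra.
  apply Rmult_le_compat_l; [lra|]; rewrite <- Hj; apply theta_cos_term_abs.
Qed.

Lemma theta_approx_error_le th n :
  Rabs (Series (zpair (theta_cos_term th)) - theta_approx th n)
    <= 4 / (1 - qpow 1) ^ 2 * qpow 1 ^ n.
Proof.
  destruct (theta_tail_le th n) as [_ Htail].
  pose proof (theta_approx_head_le th n) as Hhead.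
  pose proof nome_bounds as Hq.
  assert (Htail' : 2 * qpow (INR (S n) ^ 2) / (1 - qpow 1) <= 2 / (1 - qpow 1) ^ 2 * qpow 1 ^ n).
  { assert (qpow (INR (S n) ^ 2) <= qpow 1 ^ n).
    { rewrite <- qpow_INR; apply qpow_le; rewrite S_INR; pose proof (pos_INR n); nra. }
    assert (/ (1 - qpow 1) <= / (1 - qpow 1) ^ 2).
    { apply Rinv_le_contravar; [apply pow_lt; lra|]; nra. }
    assert (0 < / (1 - qpow 1)) by (apply Rinv_0_lt_compat; lra).
    pose proof (pow_le (qpow 1) n (proj1 Hq)).
    unfold Rdiv; apply Rle_trans with (2 * qpow 1 ^ n * / (1 - qpow 1)).
    - apply Rmult_le_compat_r; lra.
    - replace (2 * / (1 - qpow 1) ^ 2 * qpow 1 ^ n)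
        with (2 * qpow 1 ^ n * / (1 - qpow 1) ^ 2) by ring.
      apply Rmult_le_compat_l; lra. }
  replace (Series _ - theta_approx th n)
    with ((Series (zpair (theta_cos_term th)) - sum_f_R0 (zpair (theta_cos_term th)) n)
          + (sum_f_R0 (zpair (theta_cos_term th)) n - theta_approx th n)) by ring.
  eapply Rle_trans; [apply Rabs_triang|]; lra.
Qed.

Lemma theta_approx_cvg x : is_lim_seq (theta_approx (2 * PI * x)) (theta_it x t).
Proof.
  apply (is_lim_seq_geom_error _ _ (4 / (1 - qpow 1) ^ 2) (qpow 1) nome_bounds).
  intros n; rewrite theta_it_Series, Rabs_minus_sym; apply theta_approx_error_le.
Qed.

Lemma theta_it_half_le x : theta_it (1/2) t <= theta_it x t.
Proof.
  pose proof (theta_approx_cvg (1/2)) as Hhalf.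
  replace (2 * PI * (1/2)) with PI in Hhalf by field.
  refine (is_lim_seq_le _ _ _ _ _ Hhalf (theta_approx_cvg x)).
  intros n; unfold theta_approx; apply Rmult_le_compat_r.
  - pose proof (qpoch_gt_0 n); pose proof (qpoch_gt_0 (2 * n)).
    apply Rmult_le_pos; [apply pow_le; lra|apply Rlt_le, Rinv_0_lt_compat; lra].
  - apply theta_prod_PI_le.
Qed.

End Nome.

Lemma c_min_eq_theta_half t : 0 < t -> c_min t = theta_it (1/2) t.
Proof.
  intros Ht; unfold c_min.
  rewrite (is_glb_Rbar_unique _ (Finite (theta_it (1/2) t))); [reflexivity|split].
  - intros y [x ->]; apply theta_it_half_le, Ht.
  - intros b Hb; apply Hb; exists (1/2); reflexivity.
Qed.

Lemma theta_it_two_terms t x : 0 < t ->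
  Rabs (theta_it x t - (1 + 2 * qpow t 1 * cos (2 * PI * x)))
    <= 2 * qpow t 1 ^ 4 / (1 - qpow t 1).
Proof.
  intros Ht; destruct (theta_tail_le t Ht (2 * PI * x) 1) as [_ Htail].
  rewrite <- theta_it_Series in Htail by exact Ht.
  replace (qpow t (INR 2 ^ 2)) with (qpow t 1 ^ 4) in Htail
    by (rewrite <- qpow_INR; f_equal; simpl; ring).
  replace (sum_f_R0 _ 1) with (1 + 2 * qpow t 1 * cos (2 * PI * x)) in Htail; [exact Htail|].
  simpl; unfold theta_cos_term; simpl IZR.
  replace (0 ^ 2) with 0 by ring; replace (1 ^ 2) with 1 by ring.
  replace ((-1) ^ 2) with 1 by ring; replace (0 * (2 * PI * x)) with 0 by ring.
  replace (-1 * (2 * PI * x)) with (- (2 * PI * x)) by ring.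
  rewrite qpow_0, cos_0, cos_neg, !Rmult_1_l; ring.
Qed.

Lemma nome_le_fifth t : 527/1000 < t -> qpow t 1 <= 1/5.
Proof.
  intros Ht.
  assert (HPI : 31415/10000 <= PI).
  { destruct (PI_2_3_7_ineq 1) as [HPI _].
    unfold tg_alt, PI_2_3_7_tg, Ratan_seq in HPI; simpl in HPI; lra. }
  assert (Hexp : 5 <= exp (165/100)).
  { pose proof (exp_ge_taylor (165/100) 4 ltac:(lra)) as Htaylor; simpl in Htaylor; lra. }
  assert (exp (165/100) < exp (PI * t)) by (apply exp_increasing; nra).
  unfold qpow; replace (- PI * t * 1) with (- (PI * t)) by ring; rewrite exp_Ropp.
  replace (1/5) with (/ 5) by field; apply Rinv_le_contravar; lra.
Qed.

Lemma square_excess_ratio_lt_1 (C c s : R) :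
  0 <= s <= 404/1000 -> 0 <= C <= 1 + s -> 1 - s <= c -> C * (C - 1) / c < 1.
Proof.
  intros Hs HC Hc.
  assert (HCC : C * (C - 1) <= (1 + s) * s) by (destruct (Rle_or_lt 1 C); nra).
  apply Rmult_lt_reg_r with c; [lra|].
  unfold Rdiv; rewrite Rmult_assoc, Rinv_l, Rmult_1_r by lra; nra.
Qed.

Theorem proposition1p3 :
  (forall t : R, 0 < t -> c_min t = theta_it (1/2) t) /\
  (forall t : R, 527/1000 < t -> C_max t * (C_max t - 1) / c_min t < 1).
Proof.
  split; [exact c_min_eq_theta_half|].
  intros t Ht; assert (Ht0 : 0 < t) by lra.
  rewrite c_min_eq_theta_half by exact Ht0; unfold C_max.
  pose proof (theta_it_two_terms t 0 Ht0) as HC.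
  pose proof (theta_it_two_terms t (1/2) Ht0) as Hc.
  replace (2 * PI * 0) with 0 in HC by ring; rewrite cos_0 in HC.
  replace (2 * PI * (1/2)) with PI in Hc by field; rewrite cos_PI in Hc.
  pose proof (nome_le_fifth t Ht) as Hq; pose proof (qpow_gt_0 t 1) as Hq0.
  set (q := qpow t 1) in *; set (e := 2 * q ^ 4 / (1 - q)) in *.
  assert (He : 0 <= e <= 1/250).
  { assert (He' : e * (1 - q) = 2 * q ^ 4) by (unfold e; field; lra).
    assert (q ^ 4 <= 1/625) by (replace (1/625) with ((1/5) ^ 4) by field; apply pow_incr; lra).
    pose proof (pow_le q 4 (Rlt_le _ _ Hq0)); split; nra. }
  apply Rabs_le_between in HC; apply Rabs_le_between in Hc.
  apply (square_excess_ratio_lt_1 _ _ (2 * q + e)); lra.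
Qed.
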